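(* Consider the planar system $$\frac{dN}{dt}=rN\left(1-\frac{N}{K}-\frac{h}{w+N}\right)-\frac{aNP}{b+N^2},\qquad \frac{dP}{dt}=\frac{cNP}{b+N^2}-\delta P,$$ where $r,K,h,w,a,b,c,\delta$ are positive constants with $w<K$, and suppose the Allee effect is weak, i.e. $h<w$. Let $$N_1=\frac{(K-w)+\sqrt{(K-w)^2-4K(h-w)}}{2}$$ and $E_1=(N_1,0)$. Then $E_1$ is locally asymptotically stable if $c<\frac{\delta(b+N_1^2)}{N_1}$, and unstable (a saddle) if $c>\frac{\delta(b+N_1^2)}{N_1}$.
   Context: $N(t)$ is the prey density and $P(t)$ the predator density. $E_1$ is the (unique) predator-free equilibrium with positive prey density in the weak Allee case. *)

From Stdlib Require Import Reals Lra.
From Coquelicot Require Import Coquelicot.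
Open Scope R_scope.

Definition fN (r K h w a b : R) (N P : R) : R :=
  r * N * (1 - N / K - h / (w + N)) - a * N * P / (b + N ^ 2).
Definition fP (b c delta : R) (N P : R) : R :=
  c * N * P / (b + N ^ 2) - delta * P.

Definition dist2 (x1 y1 x2 y2 : R) : R := sqrt ((x1 - x2) ^ 2 + (y1 - y2) ^ 2).

Definition is_solution_on (F G : R -> R -> R) (T : R) (N P : R -> R) : Prop :=
  forall t, 0 <= t <= T ->
    is_derive N t (F (N t) (P t)) /\ is_derive P t (G (N t) (P t)).

Definition is_global_solution (F G : R -> R -> R) (N P : R -> R) : Prop :=
  forall t, 0 <= t ->
    is_derive N t (F (N t) (P t)) /\ is_derive P t (G (N t) (P t)).

Definition lyapunov_stable (F G : R -> R -> R) (x y : R) : Prop :=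
  forall eps, 0 < eps -> exists d, 0 < d /\
    forall T N P, is_solution_on F G T N P ->
      dist2 (N 0) (P 0) x y < d ->
      forall t, 0 <= t <= T -> dist2 (N t) (P t) x y < eps.

Definition locally_attractive (F G : R -> R -> R) (x y : R) : Prop :=
  exists d, 0 < d /\
    forall N P, is_global_solution F G N P ->
      dist2 (N 0) (P 0) x y < d ->
      is_lim N p_infty x /\ is_lim P p_infty y.

Definition locally_asymptotically_stable (F G : R -> R -> R) (x y : R) : Prop :=
  lyapunov_stable F G x y /\ locally_attractive F G x y.

Definition unstable (F G : R -> R -> R) (x y : R) : Prop :=
  ~ lyapunov_stable F G x y.

Definition jac11 (F : R -> R -> R) x y := Derive (fun n => F n y) x.
Definition jac12 (F : R -> R -> R) x y := Derive (fun p => F x p) y.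

Definition jacobian_eigenvalue (F G : R -> R -> R) (x y lam : R) : Prop :=
  exists v1 v2, (v1 <> 0 \/ v2 <> 0) /\
    jac11 F x y * v1 + jac12 F x y * v2 = lam * v1 /\
    jac11 G x y * v1 + jac12 G x y * v2 = lam * v2.

Definition saddle (F G : R -> R -> R) (x y : R) : Prop :=
  exists l1 l2, l1 < 0 < l2 /\
    jacobian_eigenvalue F G x y l1 /\ jacobian_eigenvalue F G x y l2.

Definition N1 (K h w : R) : R :=
  ((K - w) + sqrt ((K - w) ^ 2 - 4 * K * (h - w))) / 2.

From Stdlib Require Import Reals Lra Classical.
From Coquelicot Require Import Coquelicot.
Open Scope R_scope.

(* Near E1 = (N1, 0) the field factors as
     fN = - (N - N1) prey_factor N - pred_response N P,    fP = P pred_growth N,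
   with prey_factor N1 > 0 and pred_growth N1 of the sign of c - delta (b + N1^2) / N1;
   the Jacobian is triangular with eigenvalues - prey_factor N1 and pred_growth N1.
   If pred_growth N1 < 0, the quadratic form (N - N1)^2 + k P^2, with k large enough to
   absorb the cross term, decays exponentially along solutions near E1.
   If pred_growth N1 > 0, then P grows at least like exp (pred_growth N1 t / 2) as long
   as a solution stays near E1, so the solutions starting with a small P > 0 (which
   exist by Picard iteration, the field being locally Lipschitz) leave a fixed
   neighbourhood of E1. *)

Lemma continuous_Rabs_iff (f : R -> R) x :
  continuous f x <->
  forall e, 0 < e -> exists d, 0 < d /\ forall y, Rabs (y - x) < d -> Rabs (f y - f x) < e.
Proof.
  split.
  - intros Hc e He.
    destruct (proj1 (filterlim_locally f (f x)) Hc (mkposreal e He)) as [d Hd].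
    exists d; split; [apply cond_pos|]. intros y Hy. apply Hd, Hy.
  - intros H. apply filterlim_locally. intros [e He].
    destruct (H e He) as [d [Hd Hfd]]. exists (mkposreal d Hd). intros y Hy. apply Hfd, Hy.
Qed.

Lemma continuous_locally_Rabs (f : R -> R) x e : continuous f x -> 0 < e ->
  locally x (fun y => Rabs (f y - f x) < e).
Proof.
  intros Hc He. destruct (proj1 (continuous_Rabs_iff f x) Hc e He) as [d [Hd Hfd]].
  exists (mkposreal d Hd). intros y Hy. apply Hfd, Hy.
Qed.

Lemma locally_closed_ball x (Q : R -> Prop) : locally x Q ->
  exists rho, 0 < rho /\ forall y, Rabs (y - x) <= rho -> Q y.
Proof.
  intros [e He]. exists (e / 2). pose proof (cond_pos e).
  split; [lra|]. intros y Hy. apply He. change (Rabs (y - x) < e). lra.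
Qed.

Lemma continuous_of_is_derive (f : R -> R) t l : is_derive f t l -> continuous f t.
Proof. intros H. apply (ex_derive_continuous (K := R_AbsRing) (V := R_NormedModule)). now exists l. Qed.

Lemma Rabs_le_of_sq a c : 0 <= c -> a ^ 2 <= c ^ 2 -> Rabs a <= c.
Proof. intros Hc H. rewrite <- pow2_abs in H. pose proof (Rabs_pos a). nra. Qed.

Lemma Rabs_lt_of_sq a c : 0 < c -> a ^ 2 < c ^ 2 -> Rabs a < c.
Proof. intros Hc H. rewrite <- pow2_abs in H. pose proof (Rabs_pos a). nra. Qed.

Lemma continuous_induction (f : R -> R) (T c : R) :
  (forall t, 0 <= t <= T -> continuous f t) -> f 0 < c ->
  (forall s, 0 <= s <= T -> (forall u, 0 <= u <= s -> f u <= c) -> f s < c) ->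
  forall t, 0 <= t <= T -> f t < c.
Proof.
  intros Hcont H0 Hstep t Ht.
  (* For [m = sup A]: [f < c] on [[0, m)], so [f m <= c] by continuity, so [f m < c];
     continuity at [m] then rules out [m < T]. *)
  set (A := fun s => 0 <= s <= T /\ forall u, 0 <= u <= s -> f u < c).
  assert (HA0 : A 0).
  { split; [lra|]. intros u Hu. now replace u with 0 by lra. }
  destruct (completeness A) as [m [Hub Hlub]].
  { exists T. now intros s [Hs _]. }
  { now exists 0. }
  assert (Hm : 0 <= m <= T).
  { split; [now apply Hub | apply Hlub; now intros s [Hs _]]. }
  assert (Hbelow : forall u, 0 <= u < m -> f u < c).
  { intros u Hu. apply NNPP. intros Hfu. enough (m <= u) by lra.
    apply Hlub. intros s [Hs Hfs]. apply Rnot_lt_le. intros Hus. apply Hfu, Hfs. lra. }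
  assert (Hm_le : f m <= c).
  { apply Rnot_lt_le. intros Hlt.
    destruct (proj1 (continuous_Rabs_iff f m) (Hcont m Hm) (f m - c)) as [d [Hd Hfd]]; [lra|].
    destruct (Req_dec m 0) as [Hm0|Hm0]; [subst m; lra|].
    set (u := Rmax 0 (m - d / 2)).
    assert (Hu : 0 <= u < m /\ Rabs (u - m) < d).
    { unfold u. apply Rmax_case_strong; intros; split; try split; try apply Rabs_def1; lra. }
    specialize (Hfd u (proj2 Hu)). apply Rabs_def2 in Hfd. specialize (Hbelow u (proj1 Hu)). lra. }
  assert (Hm_lt : f m < c).
  { apply Hstep; [exact Hm|]. intros u Hu.
    destruct (Rlt_or_le u m); [left; apply Hbelow; lra | now replace u with m by lra]. }
  assert (HmT : m = T).
  { apply Rle_antisym; [lra|]. apply Rnot_lt_le. intros HmT.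
    destruct (proj1 (continuous_Rabs_iff f m) (Hcont m Hm) (c - f m)) as [d [Hd Hfd]]; [lra|].
    set (s := Rmin T (m + d / 2)).
    assert (Hs : m < s <= T) by (unfold s; apply Rmin_case_strong; lra).
    enough (HA : A s) by (specialize (Hub s HA); lra).
    split; [lra|]. intros u Hu. destruct (Rlt_or_le u m); [apply Hbelow; lra|].
    assert (Hum : Rabs (u - m) < d).
    { apply Rabs_def1; [|lra]. enough (s <= m + d / 2) by lra. apply Rmin_r. }
    specialize (Hfd u Hum). apply Rabs_def2 in Hfd. lra. }
  subst m. destruct (Rlt_or_le t T); [apply Hbelow; lra | now replace t with T by lra].
Qed.

Lemma le_of_is_derive_nonneg (f df : R -> R) a b : a <= b ->
  (forall t, a <= t <= b -> is_derive f t (df t)) ->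
  (forall t, a <= t <= b -> 0 <= df t) -> f a <= f b.
Proof.
  intros Hab Hd Hpos.
  destruct (MVT_gen f a b df) as [m [Hm Heq]].
  - intros t Ht. rewrite Rmin_left, Rmax_right in Ht by lra. apply Hd. lra.
  - intros t Ht. rewrite Rmin_left, Rmax_right in Ht by lra.
    apply continuity_pt_filterlim, (continuous_of_is_derive _ _ _ (Hd t Ht)).
  - rewrite Rmin_left, Rmax_right in Hm by lra. specialize (Hpos m Hm). nra.
Qed.

Lemma le_of_is_derive_nonpos (f df : R -> R) a b : a <= b ->
  (forall t, a <= t <= b -> is_derive f t (df t)) ->
  (forall t, a <= t <= b -> df t <= 0) -> f b <= f a.
Proof.
  intros Hab Hd Hneg.
  enough (- f a <= - f b) by lra.
  apply (le_of_is_derive_nonneg (fun t => - f t) (fun t => - df t)); [lra| |].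
  - intros t Ht. apply (is_derive_opp f), Hd, Ht.
  - intros t Ht. specialize (Hneg t Ht). lra.
Qed.

Lemma is_derive_mult_exp (f : R -> R) t df g : is_derive f t df ->
  is_derive (fun t => f t * exp (g * t)) t (exp (g * t) * (df + g * f t)).
Proof.
  intros Hf. auto_derive; [now exists df|].
  match goal with |- context [Derive ?h t] => rewrite (is_derive_unique h t df Hf) end.
  ring.
Qed.

(** * Quadratic Lyapunov functions *)

Definition lyap (k x y N P : R) : R := (N - x) ^ 2 + k * (P - y) ^ 2.

Definition lyap_orbital (F G : R -> R -> R) (k x y N P : R) : R :=
  2 * (N - x) * F N P + k * (2 * (P - y) * G N P).

Lemma lyap_nonneg k x y N P : 0 <= k -> 0 <= lyap k x y N P.
Proof. intros Hk. unfold lyap. pose proof (pow2_ge_0 (N - x)). pose proof (pow2_ge_0 (P - y)). nra. Qed.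

Lemma Rabs_le_of_lyap k x y N P c : 0 <= k -> 0 <= c -> lyap k x y N P <= c ^ 2 ->
  Rabs (N - x) <= c.
Proof.
  intros Hk Hc H. apply Rabs_le_of_sq; [exact Hc|]. unfold lyap in H.
  pose proof (pow2_ge_0 (P - y)). nra.
Qed.

Lemma is_derive_lyap_solution F G k x y T N P : is_solution_on F G T N P ->
  forall t, 0 <= t <= T ->
  is_derive (fun t => lyap k x y (N t) (P t)) t (lyap_orbital F G k x y (N t) (P t)).
Proof.
  intros Hs t Ht. destruct (Hs t Ht) as [HN HP]. unfold lyap, lyap_orbital.
  auto_derive; [split; [eexists; exact HN | split; [eexists; exact HP | exact I]]|].
  match goal with |- context [Derive ?h t] => rewrite (is_derive_unique h t _ HN) end.
  match goal with |- context [Derive ?h t] => rewrite (is_derive_unique h t _ HP) end.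
  ring.
Qed.

Lemma dist2_lt_iff N P x y e : 0 < e ->
  dist2 N P x y < e <-> (N - x) ^ 2 + (P - y) ^ 2 < e ^ 2.
Proof.
  intros He. unfold dist2.
  assert (Hs : 0 <= (N - x) ^ 2 + (P - y) ^ 2).
  { pose proof (pow2_ge_0 (N - x)). pose proof (pow2_ge_0 (P - y)). lra. }
  split; intros H.
  - pose proof (sqrt_sqrt _ Hs). pose proof (sqrt_pos ((N - x) ^ 2 + (P - y) ^ 2)). nra.
  - rewrite <- (sqrt_pow2 e) by lra. now apply sqrt_lt_1_alt.
Qed.

Lemma lyap_lt_of_dist2 k x y N P c : 1 <= k -> 0 < c ->
  dist2 N P x y < c / k -> lyap k x y N P < c ^ 2.
Proof.
  intros Hk Hc H. apply dist2_lt_iff in H; [|apply Rdiv_lt_0_compat; lra].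
  replace c with (k * (c / k)) by (field; lra).
  set (e := c / k) in *. unfold lyap.
  pose proof (pow2_ge_0 (N - x)). pose proof (pow2_ge_0 e).
  assert (k * ((N - x) ^ 2 + (P - y) ^ 2) < k * e ^ 2) by (apply Rmult_lt_compat_l; lra).
  assert ((k * e) ^ 2 = k * (k * e ^ 2)) by ring.
  assert (k * e ^ 2 <= k * (k * e ^ 2)) by (apply Rmult_le_compat_l; nra).
  assert ((N - x) ^ 2 <= k * (N - x) ^ 2) by nra.
  lra.
Qed.

Lemma dist2_lt_of_lyap k x y N P c : 1 <= k -> 0 < c ->
  lyap k x y N P < c ^ 2 -> dist2 N P x y < c.
Proof.
  intros Hk Hc H. apply dist2_lt_iff; [exact Hc|]. unfold lyap in H.
  pose proof (pow2_ge_0 (P - y)). nra.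
Qed.

Lemma is_lim_of_sq_le_exp (f : R -> R) l A g : 0 < g ->
  (forall t, 0 <= t -> (f t - l) ^ 2 <= A * exp (- (g * t))) -> is_lim f p_infty l.
Proof.
  intros Hg Hf. apply is_lim_spec. intros [e He]. simpl.
  set (A' := Rabs A + 1).
  assert (HA' : A <= A' /\ 0 < A') by (unfold A'; pose proof (Rle_abs A); pose proof (Rabs_pos A); lra).
  assert (Hq : 0 < e ^ 2 / A') by (apply Rdiv_lt_0_compat; nra).
  exists (Rmax 0 (- ln (e ^ 2 / A') / g)). intros t Ht.
  pose proof (Rmax_l 0 (- ln (e ^ 2 / A') / g)). pose proof (Rmax_r 0 (- ln (e ^ 2 / A') / g)).
  assert (Hexp : exp (- (g * t)) < e ^ 2 / A').
  { rewrite <- (exp_ln _ Hq). apply exp_increasing.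
    assert (- ln (e ^ 2 / A') / g < t) by lra. apply Rlt_div_l in H1; lra. }
  apply Rabs_lt_of_sq; [exact He|].
  pose proof (exp_pos (- (g * t))). specialize (Hf t ltac:(lra)).
  apply Rlt_div_r in Hexp; [|lra]. nra.
Qed.

Section QuadraticLyapunov.

Variables (F G : R -> R -> R) (x y rho g k : R).
Hypotheses (Hrho : 0 < rho) (Hg : 0 < g) (Hk : 1 <= k).
Hypothesis Hdecay : forall N P, Rabs (N - x) <= rho ->
  lyap_orbital F G k x y N P <= - g * lyap k x y N P.

Lemma lyap_sublevel_invariant T N P c : is_solution_on F G T N P -> 0 < c <= rho ->
  lyap k x y (N 0) (P 0) < c ^ 2 ->
  forall t, 0 <= t <= T -> lyap k x y (N t) (P t) < c ^ 2.
Proof.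
  intros Hs Hc H0. apply continuous_induction; [|exact H0|].
  - intros t Ht. eapply continuous_of_is_derive, is_derive_lyap_solution; eassumption.
  - intros s Hs' Hle. eapply Rle_lt_trans; [|exact H0].
    apply (le_of_is_derive_nonpos (fun t => lyap k x y (N t) (P t))
      (fun t => lyap_orbital F G k x y (N t) (P t))); [lra| |].
    + intros t Ht. apply (is_derive_lyap_solution _ _ _ _ _ T); [exact Hs | lra].
    + intros u Hu. pose proof (lyap_nonneg k x y (N u) (P u) ltac:(lra)).
      enough (lyap_orbital F G k x y (N u) (P u) <= - g * lyap k x y (N u) (P u)) by nra.
      apply Hdecay, (Rle_trans _ c); [|lra].
      apply (Rabs_le_of_lyap k x y _ (P u)); [lra | lra | now apply Hle].
Qed.

Lemma lyap_exp_decay T N P : is_solution_on F G T N P ->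
  lyap k x y (N 0) (P 0) < rho ^ 2 ->
  forall t, 0 <= t <= T -> lyap k x y (N t) (P t) * exp (g * t) <= lyap k x y (N 0) (P 0).
Proof.
  intros Hs H0 t Ht.
  pose proof (lyap_sublevel_invariant T N P rho Hs (conj Hrho (Rle_refl _)) H0) as Hsub.
  replace (lyap k x y (N 0) (P 0)) with (lyap k x y (N 0) (P 0) * exp (g * 0))
    by (rewrite Rmult_0_r, exp_0; ring).
  apply (le_of_is_derive_nonpos (fun t => lyap k x y (N t) (P t) * exp (g * t)) (fun t => exp (g * t) *
    (lyap_orbital F G k x y (N t) (P t) + g * lyap k x y (N t) (P t)))); [lra| |].
  - intros u Hu. apply (is_derive_mult_exp (fun t => lyap k x y (N t) (P t))).
    apply (is_derive_lyap_solution _ _ _ _ _ T); [exact Hs | lra].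
  - intros u Hu. pose proof (exp_pos (g * u)).
    assert (lyap_orbital F G k x y (N u) (P u) <= - g * lyap k x y (N u) (P u)).
    { apply Hdecay, (Rabs_le_of_lyap k x y _ (P u)); try lra. left; apply Hsub; lra. }
    nra.
Qed.

Lemma lyap_locally_asymptotically_stable : locally_asymptotically_stable F G x y.
Proof.
  split.
  - intros eps Heps. set (c := Rmin rho eps).
    assert (Hc : 0 < c <= rho /\ c <= eps) by (unfold c; apply Rmin_case_strong; lra).
    exists (c / k). split; [apply Rdiv_lt_0_compat; lra|].
    intros T N P Hs H0 t Ht. apply (Rlt_le_trans _ c); [|lra].
    apply (dist2_lt_of_lyap k); [lra..|].
    apply (lyap_sublevel_invariant T); try easy. apply lyap_lt_of_dist2; lra.
  - exists (rho / k). split; [apply Rdiv_lt_0_compat; lra|].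
    intros N P Hs H0. set (V0 := lyap k x y (N 0) (P 0)).
    assert (Hdec : forall t, 0 <= t -> lyap k x y (N t) (P t) <= V0 * exp (- (g * t))).
    { intros t Ht. rewrite exp_Ropp. pose proof (exp_pos (g * t)).
      apply (Rmult_le_reg_r (exp (g * t))); [lra|]. rewrite Rmult_assoc, Rinv_l, Rmult_1_r by lra.
      apply (lyap_exp_decay t); [intros u Hu; apply Hs; lra | | lra].
      apply lyap_lt_of_dist2; lra. }
    split; apply (is_lim_of_sq_le_exp _ _ V0 g Hg); intros t Ht; specialize (Hdec t Ht);
      unfold lyap in Hdec; pose proof (pow2_ge_0 (N t - x)); pose proof (pow2_ge_0 (P t - y)); nra.
Qed.

End QuadraticLyapunov.

(* For [u' = - ph u - mv v], [v' = qv v]: the weight [k] on [v^2] is chosen so that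
   the cross term [- 2 mv u v] is absorbed by AM-GM. *)
Lemma triangular_lyap_bound u v ph qv mv al be M k :
  0 < al -> 0 < be -> 0 <= M -> be <= ph -> qv <= - al -> Rabs mv <= M ->
  k = 1 + M ^ 2 / (al * be) ->
  2 * u * (- u * ph - mv * v) + k * (2 * v * (v * qv)) <= - Rmin al be * (u ^ 2 + k * v ^ 2).
Proof.
  intros Hal Hbe HM Hph Hq Hm Hk.
  assert (HkM : M ^ 2 = (k - 1) * al * be) by (rewrite Hk; field; lra).
  assert (Hk1 : 1 <= k).
  { rewrite Hk. enough (0 <= M ^ 2 / (al * be)) by lra.
    apply Rdiv_le_0_compat; [apply pow2_ge_0 | nra]. }
  assert (Hcross : - (2 * mv * u * v) * be <= be * be * u ^ 2 + M ^ 2 * v ^ 2).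
  { assert (- (mv * u * v) <= M * (Rabs u * Rabs v)).
    { eapply Rle_trans; [apply Rle_abs|]. rewrite Rabs_Ropp, !Rabs_mult, Rmult_assoc.
      apply Rmult_le_compat_r; [apply Rmult_le_pos; apply Rabs_pos | exact Hm]. }
    rewrite <- (pow2_abs u), <- (pow2_abs v).
    pose proof (pow2_ge_0 (be * Rabs u - M * Rabs v)). nra. }
  assert (Hcross' : - (2 * mv * u * v) <= be * u ^ 2 + (k - 1) * al * v ^ 2).
  { rewrite HkM in Hcross. apply (Rmult_le_reg_r be); [exact Hbe|]. nra. }
  pose proof (pow2_ge_0 u). pose proof (pow2_ge_0 v).
  assert (u ^ 2 * be <= u ^ 2 * ph) by nra.
  assert (Hkv : 0 <= k * v ^ 2) by nra.
  assert (k * v ^ 2 * qv <= - (k * v ^ 2 * al)).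
  { replace (- (k * v ^ 2 * al)) with (k * v ^ 2 * (- al)) by ring.
    now apply Rmult_le_compat_l. }
  set (m := Rmin al be). assert (m <= al /\ m <= be) by (split; [apply Rmin_l | apply Rmin_r]).
  assert (m * u ^ 2 <= be * u ^ 2 /\ m * (k * v ^ 2) <= al * (k * v ^ 2)) by (split; nra).
  nra.
Qed.

(** * Existence of solutions by Picard iteration *)

Lemma geom_lt B e : 0 < e -> exists n, B / 2 ^ n < e.
Proof.
  intros He.
  assert (Hq : 0 < e / (Rabs B + 1)) by (apply Rdiv_lt_0_compat; pose proof (Rabs_pos B); lra).
  destruct (pow_lt_1_zero (/ 2) ltac:(rewrite Rabs_pos_eq; lra) _ Hq) as [n Hn].
  exists n. specialize (Hn n (Nat.le_refl n)).
  rewrite pow_inv, Rabs_pos_eq in Hn by (apply Rlt_le, Rinv_0_lt_compat, pow_lt; lra).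
  pose proof (Rle_abs B). pose proof (Rabs_pos B).
  assert (Hn' : / 2 ^ n * (Rabs B + 1) < e) by (apply Rlt_div_r in Hn; lra).
  pose proof (Rinv_0_lt_compat _ (pow_lt 2 n ltac:(lra))). unfold Rdiv. nra.
Qed.

Lemma eq_0_of_le_geom z A : (forall n, Rabs z <= A / 2 ^ n) -> z = 0.
Proof.
  intros H. destruct (Req_dec z 0) as [|Hz]; [easy|].
  destruct (geom_lt A (Rabs z) (Rabs_pos_lt _ Hz)) as [n Hn]. specialize (H n). lra.
Qed.

Lemma Lim_seq_dist_le_geom (u : nat -> R) A :
  (forall n m, (n <= m)%nat -> Rabs (u m - u n) <= A / 2 ^ n) ->
  forall n, Rabs (real (Lim_seq u) - u n) <= A / 2 ^ n.
Proof.
  intros Hu.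
  assert (Hex : ex_finite_lim_seq u).
  { apply ex_lim_seq_cauchy_corr. intros [e He]. simpl.
    destruct (geom_lt (2 * A) e He) as [N HN]. exists N. intros n m Hn Hm.
    pose proof (Hu N n Hn). pose proof (Hu N m Hm).
    replace (u n - u m) with ((u n - u N) - (u m - u N)) by ring.
    eapply Rle_lt_trans; [apply Rabs_triang|]. rewrite Rabs_Ropp.
    replace (2 * A / 2 ^ N) with (A / 2 ^ N + A / 2 ^ N) in HN by (field; apply pow_nonzero; lra).
    lra. }
  intros n. pose proof (Lim_seq_correct' u Hex) as Hl. apply is_lim_seq_spec in Hl.
  set (l := real (Lim_seq u)) in *.
  apply Rnot_lt_le. intros Hgt.
  destruct (Hl (mkposreal _ (proj2 (Rlt_0_minus _ _) Hgt))) as [N HN]. simpl in HN.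
  set (M := Nat.max N n). specialize (HN M (Nat.le_max_l _ _)). specialize (Hu n M (Nat.le_max_r _ _)).
  enough (Rabs (l - u n) <= Rabs (u M - u n) + Rabs (u M - l)) by lra.
  replace (l - u n) with ((u M - u n) + (l - u M)) by ring.
  rewrite <- (Rabs_Ropp (u M - l)), Ropp_minus_distr. apply Rabs_triang.
Qed.

Lemma continuous_of_geom_approx (f : R -> R) (g : nat -> R -> R) A t :
  (forall n u, Rabs (f u - g n u) <= A / 2 ^ n) -> (forall n, continuous (g n) t) ->
  continuous f t.
Proof.
  intros Happ Hg. apply continuous_Rabs_iff. intros e He.
  destruct (geom_lt (3 * A) e He) as [n Hn].
  destruct (proj1 (continuous_Rabs_iff _ _) (Hg n) (e / 3)) as [d [Hd Hgd]]; [lra|].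
  exists d. split; [exact Hd|]. intros y Hy. specialize (Hgd y Hy).
  pose proof (Happ n y). pose proof (Happ n t).
  replace (f y - f t) with ((f y - g n y) + (g n y - g n t) - (f t - g n t)) by ring.
  replace (3 * A / 2 ^ n) with (3 * (A / 2 ^ n)) in Hn by (field; apply pow_nonzero; lra).
  eapply Rle_lt_trans; [apply Rabs_triang|]. rewrite Rabs_Ropp.
  pose proof (Rabs_triang (f y - g n y) (g n y - g n t)). lra.
Qed.

Definition clamp (lo hi t : R) : R := Rmin (Rmax t lo) hi.

Lemma clamp_in lo hi t : lo <= hi -> lo <= clamp lo hi t <= hi.
Proof. intros. unfold clamp. repeat (apply Rmin_case_strong || apply Rmax_case_strong); lra. Qed.

Lemma clamp_id lo hi t : lo <= t <= hi -> clamp lo hi t = t.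
Proof. intros. unfold clamp. repeat (apply Rmin_case_strong || apply Rmax_case_strong); lra. Qed.

Lemma clamp_lipschitz lo hi u v : Rabs (clamp lo hi u - clamp lo hi v) <= Rabs (u - v).
Proof.
  unfold clamp, Rmin, Rmax. repeat destruct Rle_dec; unfold Rabs; repeat destruct Rcase_abs; lra.
Qed.

Lemma continuous_clamp lo hi t : continuous (clamp lo hi) t.
Proof.
  apply continuous_Rabs_iff. intros e He. exists e. split; [exact He|].
  intros y Hy. eapply Rle_lt_trans; [apply clamp_lipschitz | exact Hy].
Qed.

Definition lipschitz2 (L : R) (F : R -> R -> R) : Prop :=
  forall a b a' b', Rabs (F a b - F a' b') <= L * (Rabs (a - a') + Rabs (b - b')).

Lemma continuous_lipschitz2 (F : R -> R -> R) L (f g : R -> R) t : 0 < L -> lipschitz2 L F ->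
  continuous f t -> continuous g t -> continuous (fun s => F (f s) (g s)) t.
Proof.
  intros HL HF Cf Cg. apply continuous_Rabs_iff. intros e He.
  assert (He' : 0 < e / (2 * L)) by (apply Rdiv_lt_0_compat; lra).
  destruct (proj1 (continuous_Rabs_iff f t) Cf _ He') as [d1 [Hd1 P1]].
  destruct (proj1 (continuous_Rabs_iff g t) Cg _ He') as [d2 [Hd2 P2]].
  exists (Rmin d1 d2). split; [apply Rmin_case; lra|].
  intros y Hy. eapply Rle_lt_trans; [apply HF|].
  specialize (P1 y (Rlt_le_trans _ _ _ Hy (Rmin_l _ _))).
  specialize (P2 y (Rlt_le_trans _ _ _ Hy (Rmin_r _ _))).
  replace e with (L * (e / (2 * L) + e / (2 * L))) by (field; lra).
  apply Rmult_lt_compat_l; lra.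
Qed.

Lemma ex_RInt_of_continuous (f : R -> R) a b : (forall z, continuous f z) -> ex_RInt f a b.
Proof. intros Hf. apply (ex_RInt_continuous (V := R_CompleteNormedModule)). intros; apply Hf. Qed.

Lemma is_derive_RInt_of_continuous (f : R -> R) t0 t : (forall z, continuous f z) ->
  is_derive (fun u => RInt f t0 u) t (f t).
Proof.
  intros Hf. apply (is_derive_RInt f _ t0 t); [|apply Hf].
  exists (mkposreal 1 Rlt_0_1). intros u _.
  apply (RInt_correct (V := R_CompleteNormedModule)), ex_RInt_of_continuous, Hf.
Qed.

Lemma is_derive_const_add_RInt (f : R -> R) z0 lo t : (forall z, continuous f z) ->
  is_derive (fun u => z0 + RInt f lo u) t (f t).
Proof.
  intros Hf. replace (f t) with (plus 0 (f t)) by (unfold plus; simpl; ring).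
  apply (is_derive_plus (fun _ => z0) (fun u => RInt f lo u)).
  - apply (is_derive_const (K := R_AbsRing) (V := R_NormedModule)).
  - now apply is_derive_RInt_of_continuous.
Qed.

Lemma continuous_RInt_clamp (f : R -> R) z0 lo hi t : (forall z, continuous f z) ->
  continuous (fun u => z0 + RInt f lo (clamp lo hi u)) t.
Proof.
  intros Hf. apply (continuous_comp (clamp lo hi) (fun v => z0 + RInt f lo v)).
  - apply continuous_clamp.
  - eapply continuous_of_is_derive, is_derive_const_add_RInt, Hf.
Qed.

Lemma is_derive_of_integral_eq (Z f : R -> R) z0 lo hi t : lo < t < hi ->
  (forall z, continuous f z) -> (forall u, Z u = z0 + RInt f lo (clamp lo hi u)) ->
  is_derive Z t (f t).
Proof.
  intros Ht Hf HZ. apply (is_derive_ext_loc (fun u => z0 + RInt f lo u)).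
  - assert (Hd : 0 < Rmin (t - lo) (hi - t)) by (apply Rmin_case; lra).
    exists (mkposreal _ Hd). intros u Hu. change (Rabs (u - t) < Rmin (t - lo) (hi - t)) in Hu.
    pose proof (Rmin_l (t - lo) (hi - t)). pose proof (Rmin_r (t - lo) (hi - t)).
    apply Rabs_def2 in Hu. now rewrite HZ, clamp_id by lra.
  - now apply is_derive_const_add_RInt.
Qed.

Lemma Rabs_sub_le_of_integral_eq (Z f : R -> R) z0 lo hi B t : lo <= t <= hi ->
  (forall z, continuous f z) -> (forall u, Rabs (f u) <= B) ->
  (forall u, Z u = z0 + RInt f lo (clamp lo hi u)) -> Rabs (Z t - z0) <= (t - lo) * B.
Proof.
  intros Ht Hf HB HZ. rewrite HZ, clamp_id by lra.
  assert (E : forall v, z0 + v - z0 = v) by (intros; ring). rewrite E.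
  apply abs_RInt_le_const; [lra | now apply ex_RInt_of_continuous | intros; apply HB].
Qed.

Lemma RInt_abs_le_exp (f : R -> R) A l t0 s : 0 < l -> t0 <= s -> (forall z, continuous f z) ->
  (forall u, t0 <= u <= s -> Rabs (f u) <= A * exp (l * (u - t0))) ->
  Rabs (RInt f t0 s) <= A * (exp (l * (s - t0)) - 1) / l.
Proof.
  intros Hl Hs Hf Hb.
  assert (Hexp : forall z, continuous (fun u => A * exp (l * (u - t0))) z).
  { intros z. apply (ex_derive_continuous (K := R_AbsRing) (V := R_NormedModule)). now auto_derive. }
  replace (A * (exp (l * (s - t0)) - 1) / l) with (RInt (fun u => A * exp (l * (u - t0))) t0 s).
  - eapply Rle_trans; [apply abs_RInt_le; [exact Hs | now apply ex_RInt_of_continuous]|].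
    apply RInt_le; [exact Hs | | now apply ex_RInt_of_continuous | intros u Hu; apply Hb; lra].
    apply ex_RInt_of_continuous. intros z. apply continuous_Rabs_comp, Hf.
  - apply is_RInt_unique.
    replace (A * (exp (l * (s - t0)) - 1) / l)
      with (minus (A * exp (l * (s - t0)) / l) (A * exp (l * (t0 - t0)) / l))
      by (unfold minus, plus, opp; simpl; rewrite Rminus_diag, Rmult_0_r, exp_0; field; lra).
    apply (is_RInt_derive (fun u => A * exp (l * (u - t0)) / l)).
    + intros u _. auto_derive; [easy|]. change (u + - t0) with (u - t0). field. lra.
    + intros u _. apply Hexp.
Qed.

(* Freezing time outside
   [[t0, t0 + T]] makes the iterates converge uniformly on the whole line, at the
   geometric rate [1/2^n] for the weighted distance [exp (- 4 L (t - t0))]. *)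
Section Picard.

Variables (F G : R -> R -> R) (L t0 T x0 y0 : R).
Hypotheses (HL : 0 < L) (HT : 0 < T) (HF : lipschitz2 L F) (HG : lipschitz2 L G).

Fixpoint picard_iter (n : nat) : (R -> R) * (R -> R) :=
  match n with
  | O => (fun _ => x0, fun _ => y0)
  | S n =>
    (fun t => x0 + RInt (fun s => F (fst (picard_iter n) s) (snd (picard_iter n) s)) t0
                     (clamp t0 (t0 + T) t),
     fun t => y0 + RInt (fun s => G (fst (picard_iter n) s) (snd (picard_iter n) s)) t0
                     (clamp t0 (t0 + T) t))
  end.

Definition Xn n := fst (picard_iter n).
Definition Yn n := snd (picard_iter n).

Lemma Xn_S n t : Xn (S n) t = x0 + RInt (fun s => F (Xn n s) (Yn n s)) t0 (clamp t0 (t0 + T) t).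
Proof. reflexivity. Qed.

Lemma Yn_S n t : Yn (S n) t = y0 + RInt (fun s => G (Xn n s) (Yn n s)) t0 (clamp t0 (t0 + T) t).
Proof. reflexivity. Qed.

Lemma continuous_Xn_Yn n t : continuous (Xn n) t /\ continuous (Yn n) t.
Proof.
  revert t. induction n as [|n IH]; intros t; [split; apply continuous_const|].
  split; apply continuous_RInt_clamp; intros z;
    [apply (continuous_lipschitz2 F L) | apply (continuous_lipschitz2 G L)]; try easy; apply IH.
Qed.

Lemma continuous_along_Xn_Yn (H : R -> R -> R) n z : lipschitz2 L H ->
  continuous (fun s => H (Xn n s) (Yn n s)) z.
Proof. intros HH. apply (continuous_lipschitz2 H L); try easy; apply continuous_Xn_Yn. Qed.

Lemma Xn_Yn_clamp n t :
  Xn n (clamp t0 (t0 + T) t) = Xn n t /\ Yn n (clamp t0 (t0 + T) t) = Yn n t.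
Proof.
  destruct n as [|n]; [easy|].
  rewrite !Xn_S, !Yn_S, (clamp_id _ _ (clamp _ _ t)) by (apply clamp_in; lra). easy.
Qed.

Lemma RInt_along_Xn_Yn_sub (H : R -> R -> R) n s : lipschitz2 L H ->
  RInt (fun u => H (Xn (S n) u) (Yn (S n) u) - H (Xn n u) (Yn n u)) t0 s =
  RInt (fun u => H (Xn (S n) u) (Yn (S n) u)) t0 s - RInt (fun u => H (Xn n u) (Yn n u)) t0 s.
Proof.
  intros HH. apply (RInt_minus (V := R_CompleteNormedModule));
    apply ex_RInt_of_continuous; intros z; now apply continuous_along_Xn_Yn.
Qed.

Lemma Xn_Yn_S_sub n s : t0 <= s <= t0 + T ->
  Xn (S (S n)) s - Xn (S n) s =
    RInt (fun u => F (Xn (S n) u) (Yn (S n) u) - F (Xn n u) (Yn n u)) t0 s /\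
  Yn (S (S n)) s - Yn (S n) s =
    RInt (fun u => G (Xn (S n) u) (Yn (S n) u) - G (Xn n u) (Yn n u)) t0 s.
Proof.
  intros Hs. rewrite (Xn_S (S n)), (Xn_S n), (Yn_S (S n)), (Yn_S n), clamp_id by lra.
  rewrite !RInt_along_Xn_Yn_sub by easy. split; ring.
Qed.

Definition picard_step n s := Rabs (Xn (S n) s - Xn n s) + Rabs (Yn (S n) s - Yn n s).

Let C := T * (Rabs (F x0 y0) + Rabs (G x0 y0)).

Lemma C_nonneg : 0 <= C.
Proof. unfold C. pose proof (Rabs_pos (F x0 y0)). pose proof (Rabs_pos (G x0 y0)). nra. Qed.

Lemma picard_step_le n s : t0 <= s <= t0 + T ->
  picard_step n s <= C * exp (4 * L * (s - t0)) / 2 ^ n.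
Proof.
  pose proof C_nonneg as HC. revert s. induction n as [|n IH]; intros s Hs.
  - unfold picard_step. rewrite Xn_S, Yn_S, clamp_id by lra. unfold Xn, Yn; simpl.
    rewrite !RInt_const. unfold scal; simpl; unfold mult; simpl.
    replace (x0 + (s - t0) * F x0 y0 - x0) with ((s - t0) * F x0 y0) by ring.
    replace (y0 + (s - t0) * G x0 y0 - y0) with ((s - t0) * G x0 y0) by ring.
    rewrite !Rabs_mult, Rabs_right, Rdiv_1_r by lra.
    pose proof (exp_ineq1_le (4 * L * (s - t0))).
    pose proof (Rabs_pos (F x0 y0)). pose proof (Rabs_pos (G x0 y0)). unfold C in *.
    assert (0 <= 4 * L * (s - t0)) by nra. nra.
  - destruct (Xn_Yn_S_sub n s Hs) as [EX EY]. unfold picard_step. rewrite EX, EY.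
    set (E := exp (4 * L * (s - t0))). set (A := L * (C / 2 ^ n)).
    assert (Hb : forall H, lipschitz2 L H ->
      Rabs (RInt (fun u => H (Xn (S n) u) (Yn (S n) u) - H (Xn n u) (Yn n u)) t0 s)
      <= A * (E - 1) / (4 * L)).
    { intros H HH. apply RInt_abs_le_exp; [lra | lra | |].
      - intros z. apply (continuous_minus (fun u => H (Xn (S n) u) (Yn (S n) u))
          (fun u => H (Xn n u) (Yn n u))); now apply continuous_along_Xn_Yn.
      - intros u Hu. eapply Rle_trans; [apply HH|]. specialize (IH u ltac:(lra)).
        unfold picard_step in IH. unfold A.
        replace (L * (C / 2 ^ n) * exp (4 * L * (u - t0)))
          with (L * (C * exp (4 * L * (u - t0)) / 2 ^ n)) by (field; apply pow_nonzero; lra).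
        apply Rmult_le_compat_l; lra. }
    pose proof (Hb F HF). pose proof (Hb G HG).
    replace (A * (E - 1) / (4 * L)) with (C * E / 2 ^ S n / 2 - C / 2 ^ S n / 2) in *
      by (unfold A; simpl; field; split; [apply pow_nonzero | ]; lra).
    assert (0 <= C / 2 ^ S n) by (apply Rdiv_le_0_compat; [lra | apply pow_lt; lra]).
    lra.
Qed.

Let Bc := C * exp (4 * L * T).

Lemma Bc_nonneg : 0 <= Bc.
Proof. unfold Bc. pose proof C_nonneg. pose proof (exp_pos (4 * L * T)). nra. Qed.

Lemma picard_step_le_uniform n t : picard_step n t <= Bc / 2 ^ n.
Proof.
  unfold picard_step.
  destruct (Xn_Yn_clamp (S n) t) as [<- <-]. destruct (Xn_Yn_clamp n t) as [<- <-].
  pose proof (clamp_in t0 (t0 + T) t ltac:(lra)).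
  eapply Rle_trans; [apply (picard_step_le n); lra|].
  pose proof C_nonneg as HC. unfold Rdiv. apply Rmult_le_compat_r; [apply Rlt_le, Rinv_0_lt_compat, pow_lt; lra|].
  apply Rmult_le_compat_l; [exact HC|].
  destruct (Req_dec (clamp t0 (t0 + T) t - t0) T) as [->|Hne]; [lra|].
  left. apply exp_increasing. nra.
Qed.

Lemma picard_cauchy n m t : (n <= m)%nat ->
  Rabs (Xn m t - Xn n t) <= 2 * Bc / 2 ^ n /\ Rabs (Yn m t - Yn n t) <= 2 * Bc / 2 ^ n.
Proof.
  intros Hnm.
  assert (Hsum : forall j, Rabs (Xn (n + j) t - Xn n t) + Rabs (Yn (n + j) t - Yn n t)
                           <= 2 * Bc / 2 ^ n - 2 * Bc / 2 ^ (n + j)).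
  { induction j as [|j IH].
    - rewrite Nat.add_0_r, !Rminus_diag, Rabs_R0. lra.
    - rewrite Nat.add_succ_r. pose proof (picard_step_le_uniform (n + j) t) as Hs.
      unfold picard_step in Hs.
      pose proof (Rabs_triang (Xn (S (n + j)) t - Xn (n + j) t) (Xn (n + j) t - Xn n t)).
      pose proof (Rabs_triang (Yn (S (n + j)) t - Yn (n + j) t) (Yn (n + j) t - Yn n t)).
      replace (Xn (S (n + j)) t - Xn (n + j) t + (Xn (n + j) t - Xn n t))
        with (Xn (S (n + j)) t - Xn n t) in * by ring.
      replace (Yn (S (n + j)) t - Yn (n + j) t + (Yn (n + j) t - Yn n t))
        with (Yn (S (n + j)) t - Yn n t) in * by ring.
      assert (2 * Bc / 2 ^ S (n + j) = Bc / 2 ^ (n + j)) by (simpl; field; apply pow_nonzero; lra).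
      lra. }
  pose proof Bc_nonneg as HBc.
  destruct (Nat.le_exists_sub n m Hnm) as [j [-> _]]. rewrite Nat.add_comm.
  specialize (Hsum j).
  assert (0 <= 2 * Bc / 2 ^ (n + j)) by (apply Rdiv_le_0_compat; [lra | apply pow_lt; lra]).
  pose proof (Rabs_pos (Xn (n + j) t - Xn n t)). pose proof (Rabs_pos (Yn (n + j) t - Yn n t)).
  split; lra.
Qed.

Definition Xlim t := real (Lim_seq (fun n => Xn n t)).
Definition Ylim t := real (Lim_seq (fun n => Yn n t)).

Lemma Xlim_close n t : Rabs (Xlim t - Xn n t) <= 2 * Bc / 2 ^ n.
Proof.
  apply (Lim_seq_dist_le_geom (fun n => Xn n t)). intros k m Hkm. now apply picard_cauchy.
Qed.

Lemma Ylim_close n t : Rabs (Ylim t - Yn n t) <= 2 * Bc / 2 ^ n.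
Proof.
  apply (Lim_seq_dist_le_geom (fun n => Yn n t)). intros k m Hkm. now apply picard_cauchy.
Qed.

Lemma continuous_along_Xlim_Ylim (H : R -> R -> R) z : lipschitz2 L H ->
  continuous (fun s => H (Xlim s) (Ylim s)) z.
Proof.
  intros HH. apply (continuous_lipschitz2 H L); try easy.
  - apply (continuous_of_geom_approx _ Xn (2 * Bc)); [apply Xlim_close | intros; apply continuous_Xn_Yn].
  - apply (continuous_of_geom_approx _ Yn (2 * Bc)); [apply Ylim_close | intros; apply continuous_Xn_Yn].
Qed.

Lemma RInt_along_Xn_sub_Xlim_le (H : R -> R -> R) n s : lipschitz2 L H -> t0 <= s <= t0 + T ->
  Rabs (RInt (fun u => H (Xn n u) (Yn n u) - H (Xlim u) (Ylim u)) t0 s) <= T * L * (4 * Bc) / 2 ^ n.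
Proof.
  intros HH Hs. pose proof Bc_nonneg. pose proof (pow_lt 2 n ltac:(lra)).
  assert (Hcont : forall z, continuous (fun u => H (Xn n u) (Yn n u) - H (Xlim u) (Ylim u)) z).
  { intros z. apply (continuous_minus (fun u => H (Xn n u) (Yn n u)) (fun u => H (Xlim u) (Ylim u)));
      [now apply continuous_along_Xn_Yn | now apply continuous_along_Xlim_Ylim]. }
  eapply Rle_trans.
  - apply (abs_RInt_le_const _ _ _ (L * (4 * Bc / 2 ^ n))); [lra | now apply ex_RInt_of_continuous|].
    intros u Hu. eapply Rle_trans; [apply HH|]. apply Rmult_le_compat_l; [lra|].
    pose proof (Xlim_close n u) as HX. pose proof (Ylim_close n u) as HY.
    rewrite <- Rabs_Ropp, Ropp_minus_distr in HX, HY.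
    replace (4 * Bc / 2 ^ n) with (2 * Bc / 2 ^ n + 2 * Bc / 2 ^ n) by (field; lra).
    lra.
  - assert (0 <= L * (4 * Bc / 2 ^ n)) by (apply Rmult_le_pos; [lra | apply Rdiv_le_0_compat; lra]).
    replace (T * L * (4 * Bc) / 2 ^ n) with (T * (L * (4 * Bc / 2 ^ n))) by (field; lra).
    apply Rmult_le_compat_r; lra.
Qed.

Lemma picard_limit_integral_eq (H : R -> R -> R) (Z : nat -> R -> R) (Zlim : R -> R) z0 t :
  lipschitz2 L H ->
  (forall n, Z (S n) t = z0 + RInt (fun s => H (Xn n s) (Yn n s)) t0 (clamp t0 (t0 + T) t)) ->
  (forall n, Rabs (Zlim t - Z n t) <= 2 * Bc / 2 ^ n) ->
  Zlim t = z0 + RInt (fun s => H (Xlim s) (Ylim s)) t0 (clamp t0 (t0 + T) t).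
Proof.
  intros HH HZ Hclose.
  pose proof (clamp_in t0 (t0 + T) t ltac:(lra)) as Hct. set (ct := clamp t0 (t0 + T) t) in *.
  enough (Zlim t - z0 - RInt (fun s => H (Xlim s) (Ylim s)) t0 ct = 0) by lra.
  apply (eq_0_of_le_geom _ (Bc + T * L * (4 * Bc))). intros n.
  replace (Zlim t - z0 - RInt (fun s => H (Xlim s) (Ylim s)) t0 ct)
    with ((Zlim t - Z (S n) t) + RInt (fun s => H (Xn n s) (Yn n s) - H (Xlim s) (Ylim s)) t0 ct).
  2:{ rewrite (RInt_minus (V := R_CompleteNormedModule) (fun s => H (Xn n s) (Yn n s))
        (fun s => H (Xlim s) (Ylim s))); [| apply ex_RInt_of_continuous; intros z ..].
      - unfold minus, plus, opp; simpl. rewrite HZ. ring.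
      - now apply continuous_along_Xn_Yn.
      - now apply continuous_along_Xlim_Ylim. }
  eapply Rle_trans; [apply Rabs_triang|].
  pose proof (RInt_along_Xn_sub_Xlim_le H n ct HH Hct).
  assert (Rabs (Zlim t - Z (S n) t) <= Bc / 2 ^ n).
  { eapply Rle_trans; [apply Hclose|]. right. simpl. field. apply pow_nonzero. lra. }
  replace ((Bc + T * L * (4 * Bc)) / 2 ^ n) with (Bc / 2 ^ n + T * L * (4 * Bc) / 2 ^ n)
    by (field; apply pow_nonzero; lra).
  lra.
Qed.

Lemma Xlim_eq t : Xlim t = x0 + RInt (fun s => F (Xlim s) (Ylim s)) t0 (clamp t0 (t0 + T) t).
Proof. apply (picard_limit_integral_eq F Xn); [exact HF | intros; apply Xn_S | intros; apply Xlim_close]. Qed.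

Lemma Ylim_eq t : Ylim t = y0 + RInt (fun s => G (Xlim s) (Ylim s)) t0 (clamp t0 (t0 + T) t).
Proof. apply (picard_limit_integral_eq G Yn); [exact HG | intros; apply Yn_S | intros; apply Ylim_close]. Qed.

End Picard.

Lemma picard_existence (F G : R -> R -> R) (L B t0 T x0 y0 : R) : 0 < L -> 0 < T ->
  lipschitz2 L F -> lipschitz2 L G ->
  (forall a b, Rabs (F a b) <= B) -> (forall a b, Rabs (G a b) <= B) ->
  exists N P : R -> R,
    (forall t, t0 < t < t0 + T -> is_derive N t (F (N t) (P t)) /\ is_derive P t (G (N t) (P t))) /\
    (forall t, t0 <= t <= t0 + T -> Rabs (N t - x0) <= (t - t0) * B /\ Rabs (P t - y0) <= (t - t0) * B).
Proof.
  intros HL HT HF HG HFb HGb.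
  pose proof (continuous_along_Xlim_Ylim F G L t0 T x0 y0 HL HT HF HG) as CH.
  pose proof (Xlim_eq F G L t0 T x0 y0 HL HT HF HG) as EX.
  pose proof (Ylim_eq F G L t0 T x0 y0 HL HT HF HG) as EY.
  set (X := Xlim F G t0 T x0 y0) in *. set (Y := Ylim F G t0 T x0 y0) in *.
  exists X, Y. split; intros t Ht; split.
  - exact (is_derive_of_integral_eq X _ x0 _ _ t Ht (fun z => CH F z HF) EX).
  - exact (is_derive_of_integral_eq Y _ y0 _ _ t Ht (fun z => CH G z HG) EY).
  - exact (Rabs_sub_le_of_integral_eq X _ x0 _ _ B t Ht (fun z => CH F z HF) (fun u => HFb _ _) EX).
  - exact (Rabs_sub_le_of_integral_eq Y _ y0 _ _ B t Ht (fun z => CH G z HG) (fun u => HGb _ _) EY).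
Qed.

(** * Lipschitz fields on a box *)

Lemma lipschitz2_weaken L L' F : L <= L' -> lipschitz2 L F -> lipschitz2 L' F.
Proof.
  intros HLL' HF a b a' b'. eapply Rle_trans; [apply HF|].
  apply Rmult_le_compat_r; [|exact HLL'].
  pose proof (Rabs_pos (a - a')). pose proof (Rabs_pos (b - b')). lra.
Qed.

Section Box.

Variables (l1 u1 l2 u2 : R).

Definition inbox (a b : R) : Prop := l1 <= a <= u1 /\ l2 <= b <= u2.

Definition lip_bounded_on (f : R -> R -> R) : Prop :=
  exists L B, 0 <= L /\ forall a b a' b', inbox a b -> inbox a' b' ->
    Rabs (f a b - f a' b') <= L * (Rabs (a - a') + Rabs (b - b')) /\ Rabs (f a b) <= B.

Lemma lip_bounded_const c : lip_bounded_on (fun _ _ => c).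
Proof.
  exists 0, (Rabs c). split; [lra|]. intros. rewrite Rminus_diag, Rabs_R0, Rmult_0_l. lra.
Qed.

Lemma lip_bounded_fst : lip_bounded_on (fun a _ => a).
Proof.
  exists 1, (Rabs l1 + Rabs u1). split; [lra|]. intros a b a' b' [Ha _] _. split.
  - pose proof (Rabs_pos (b - b')). lra.
  - unfold Rabs; repeat destruct Rcase_abs; lra.
Qed.

Lemma lip_bounded_snd : lip_bounded_on (fun _ b => b).
Proof.
  exists 1, (Rabs l2 + Rabs u2). split; [lra|]. intros a b a' b' [_ Hb] _. split.
  - pose proof (Rabs_pos (a - a')). lra.
  - unfold Rabs; repeat destruct Rcase_abs; lra.
Qed.

Lemma lip_bounded_plus f g : lip_bounded_on f -> lip_bounded_on g ->
  lip_bounded_on (fun a b => f a b + g a b).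
Proof.
  intros (L1 & B1 & HL1 & H1) (L2 & B2 & HL2 & H2). exists (L1 + L2), (B1 + B2). split; [lra|].
  intros a b a' b' Hi Hi'.
  destruct (H1 a b a' b' Hi Hi'), (H2 a b a' b' Hi Hi'). split.
  - replace (f a b + g a b - (f a' b' + g a' b')) with ((f a b - f a' b') + (g a b - g a' b')) by ring.
    eapply Rle_trans; [apply Rabs_triang | lra].
  - eapply Rle_trans; [apply Rabs_triang | lra].
Qed.

Lemma lip_bounded_opp f : lip_bounded_on f -> lip_bounded_on (fun a b => - f a b).
Proof.
  intros (L & B & HL & H). exists L, B. split; [exact HL|].
  intros a b a' b' Hi Hi'. destruct (H a b a' b' Hi Hi').
  replace (- f a b - - f a' b') with (- (f a b - f a' b')) by ring. rewrite !Rabs_Ropp. easy.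
Qed.

Lemma lip_bounded_minus f g : lip_bounded_on f -> lip_bounded_on g ->
  lip_bounded_on (fun a b => f a b - g a b).
Proof. intros Hf Hg. now apply lip_bounded_plus, lip_bounded_opp. Qed.

Lemma lip_bounded_mult f g : lip_bounded_on f -> lip_bounded_on g ->
  lip_bounded_on (fun a b => f a b * g a b).
Proof.
  intros (L1 & B1 & HL1 & H1) (L2 & B2 & HL2 & H2).
  pose proof (Rabs_pos B1). pose proof (Rabs_pos B2).
  exists (Rabs B1 * L2 + Rabs B2 * L1), (Rabs B1 * Rabs B2). split; [nra|].
  intros a b a' b' Hi Hi'.
  destruct (H1 a b a' b' Hi Hi') as [A1 A2], (H2 a b a' b' Hi Hi') as [A3 A4].
  destruct (H2 a' b' a' b' Hi' Hi') as [_ A5].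
  pose proof (Rle_abs B1). pose proof (Rle_abs B2).
  set (D := Rabs (a - a') + Rabs (b - b')) in *.
  assert (0 <= D) by (unfold D; pose proof (Rabs_pos (a - a')); pose proof (Rabs_pos (b - b')); lra).
  split.
  - replace (f a b * g a b - f a' b' * g a' b')
      with (f a b * (g a b - g a' b') + (f a b - f a' b') * g a' b') by ring.
    eapply Rle_trans; [apply Rabs_triang|]. rewrite !Rabs_mult.
    assert (Rabs (f a b) * Rabs (g a b - g a' b') <= Rabs B1 * (L2 * D))
      by (apply Rmult_le_compat; try apply Rabs_pos; lra).
    assert (Rabs (f a b - f a' b') * Rabs (g a' b') <= (L1 * D) * Rabs B2)
      by (apply Rmult_le_compat; try apply Rabs_pos; lra).
    nra.
  - rewrite Rabs_mult. apply Rmult_le_compat; try apply Rabs_pos; lra.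
Qed.

Lemma lip_bounded_inv g m : 0 < m -> lip_bounded_on g -> (forall a b, inbox a b -> m <= g a b) ->
  lip_bounded_on (fun a b => / g a b).
Proof.
  intros Hm (L & B & HL & H) Hg. exists (L / (m * m)), (/ m).
  split; [apply Rdiv_le_0_compat; nra|].
  intros a b a' b' Hi Hi'. destruct (H a b a' b' Hi Hi') as [A1 _].
  pose proof (Hg a b Hi). pose proof (Hg a' b' Hi'). split.
  - replace (/ g a b - / g a' b') with ((g a' b' - g a b) / (g a b * g a' b')) by (field; lra).
    unfold Rdiv. rewrite Rabs_mult, Rabs_inv, (Rabs_right (g a b * g a' b')) by nra.
    rewrite <- Rabs_Ropp, Ropp_minus_distr.
    assert (/ (g a b * g a' b') <= / (m * m)) by (apply Rinv_le_contravar; nra).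
    assert (0 < / (g a b * g a' b')) by (apply Rinv_0_lt_compat; nra).
    pose proof (Rabs_pos (g a b - g a' b')).
    replace (L * / (m * m) * (Rabs (a - a') + Rabs (b - b')))
      with ((L * (Rabs (a - a') + Rabs (b - b'))) * / (m * m)) by ring.
    apply Rmult_le_compat; lra.
  - rewrite Rabs_inv, Rabs_right by lra. apply Rinv_le_contravar; lra.
Qed.

Lemma lip_bounded_div f g m : 0 < m -> lip_bounded_on f -> lip_bounded_on g ->
  (forall a b, inbox a b -> m <= g a b) -> lip_bounded_on (fun a b => f a b / g a b).
Proof. intros. apply lip_bounded_mult; [easy | now apply (lip_bounded_inv g m)]. Qed.

Lemma lip_bounded_fst_sq : lip_bounded_on (fun a _ => a ^ 2).
Proof.
  apply lip_bounded_mult; [apply lip_bounded_fst|].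
  apply lip_bounded_mult; [apply lip_bounded_fst | apply lip_bounded_const].
Qed.

Lemma lipschitz2_clamp f : l1 <= u1 -> l2 <= u2 -> lip_bounded_on f ->
  exists L B, 0 < L /\ lipschitz2 L (fun a b => f (clamp l1 u1 a) (clamp l2 u2 b)) /\
    forall a b, Rabs (f (clamp l1 u1 a) (clamp l2 u2 b)) <= B.
Proof.
  intros H1 H2 (L & B & HL & Hf). exists (L + 1), B.
  assert (Hin : forall a b, inbox (clamp l1 u1 a) (clamp l2 u2 b)) by (split; now apply clamp_in).
  split; [lra|split].
  - intros a b a' b'. destruct (Hf _ _ _ _ (Hin a b) (Hin a' b')) as [A _].
    eapply Rle_trans; [exact A|].
    pose proof (clamp_lipschitz l1 u1 a a'). pose proof (clamp_lipschitz l2 u2 b b').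
    pose proof (Rabs_pos (a - a')). pose proof (Rabs_pos (b - b')).
    pose proof (Rabs_pos (clamp l1 u1 a - clamp l1 u1 a')).
    pose proof (Rabs_pos (clamp l2 u2 b - clamp l2 u2 b')). nra.
  - intros a b. apply (Hf _ _ _ _ (Hin a b) (Hin a b)).
Qed.

(* Picard iteration for the field clamped to the box, started slightly before [0] so
   that the derivatives on [[0, T]] are two-sided. *)
Lemma box_solution (F G : R -> R -> R) T x0 y0 p :
  l1 <= u1 -> l2 <= u2 -> lip_bounded_on F -> lip_bounded_on G -> 0 < T -> 0 < p ->
  exists N P, Rabs (N 0 - x0) < p /\ Rabs (P 0 - y0) < p /\
    forall t, 0 <= t <= T -> continuous N t /\ continuous P t /\
      (inbox (N t) (P t) -> is_derive N t (F (N t) (P t)) /\ is_derive P t (G (N t) (P t))).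
Proof.
  intros H1 H2 HFl HGl HT Hp.
  destruct (lipschitz2_clamp F H1 H2 HFl) as (L1 & B1 & HL1 & Hl1 & Hb1).
  destruct (lipschitz2_clamp G H1 H2 HGl) as (L2 & B2 & HL2 & Hl2 & Hb2).
  set (B := Rabs B1 + Rabs B2). set (tau := p / (B + 1)).
  assert (HB : 0 <= B) by (unfold B; pose proof (Rabs_pos B1); pose proof (Rabs_pos B2); lra).
  assert (Htau : 0 < tau /\ tau * B < p).
  { unfold tau. split; [apply Rdiv_lt_0_compat; lra|].
    replace (p / (B + 1) * B) with (p - p / (B + 1)) by (field; lra).
    enough (0 < p / (B + 1)) by lra. apply Rdiv_lt_0_compat; lra. }
  destruct (picard_existence (fun a b => F (clamp l1 u1 a) (clamp l2 u2 b))
    (fun a b => G (clamp l1 u1 a) (clamp l2 u2 b)) (L1 + L2) B (- tau) (tau + T + 1) x0 y0)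
    as (N & P & Hder & Hbd); [lra | lra | | | | |].
  { apply (lipschitz2_weaken L1); [lra | exact Hl1]. }
  { apply (lipschitz2_weaken L2); [lra | exact Hl2]. }
  { intros a b. pose proof (Hb1 a b). pose proof (Rle_abs B1). pose proof (Rabs_pos B2). unfold B; lra. }
  { intros a b. pose proof (Hb2 a b). pose proof (Rle_abs B2). pose proof (Rabs_pos B1). unfold B; lra. }
  exists N, P. destruct (Hbd 0) as [HN0 HP0]; [lra|].
  replace (0 - - tau) with tau in HN0, HP0 by ring.
  split; [lra | split; [lra|]]. intros t Ht.
  destruct (Hder t) as [DN DP]; [lra|].
  split; [exact (continuous_of_is_derive _ _ _ DN) | split; [exact (continuous_of_is_derive _ _ _ DP)|]].
  intros [HNt HPt]. rewrite !(clamp_id l1 u1 (N t)), !(clamp_id l2 u2 (P t)) in DN, DP by easy.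
  easy.
Qed.

End Box.

(** * Instability by exponential escape *)

Lemma exp_growth_of_is_derive (P dP : R -> R) al T : 0 < P 0 ->
  (forall t, 0 <= t <= T -> is_derive P t (dP t)) ->
  (forall t, 0 <= t <= T -> 0 <= P t -> al * P t <= dP t) ->
  forall t, 0 <= t <= T -> P 0 * exp (al * t) <= P t.
Proof.
  intros HP0 Hd Hgr.
  set (Z := fun t => P t * exp (- al * t)).
  assert (HdZ : forall t, 0 <= t <= T ->
    is_derive Z t (exp (- al * t) * (dP t + - al * P t))).
  { intros t Ht. now apply is_derive_mult_exp, Hd. }
  assert (HZ0 : Z 0 = P 0) by (unfold Z; rewrite Rmult_0_r, exp_0; ring).
  assert (Hmono : forall s, 0 <= s <= T -> (forall u, 0 <= u <= s -> 0 <= P u) -> Z 0 <= Z s).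
  { intros s Hs Hpos. apply (le_of_is_derive_nonneg Z (fun t => exp (- al * t) * (dP t + - al * P t)));
      [lra | intros; apply HdZ; lra |].
    intros u Hu. pose proof (exp_pos (- al * u)). specialize (Hgr u ltac:(lra) (Hpos u Hu)). nra. }
  assert (Hpos : forall t, 0 <= t <= T -> - Z t < 0).
  { apply continuous_induction.
    - intros t Ht. apply (continuous_of_is_derive _ t (- (exp (- al * t) * (dP t + - al * P t)))).
      apply (is_derive_opp Z), HdZ, Ht.
    - lra.
    - intros s Hs Hle. enough (Z 0 <= Z s) by lra. apply Hmono; [exact Hs|].
      intros u Hu. specialize (Hle u Hu). unfold Z in Hle. pose proof (exp_pos (- al * u)). nra. }
  intros t Ht. assert (HZt : Z 0 <= Z t).
  { apply Hmono; [exact Ht|]. intros u Hu. specialize (Hpos u ltac:(lra)). unfold Z in Hpos.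
    pose proof (exp_pos (- al * u)). nra. }
  rewrite HZ0 in HZt. unfold Z in HZt.
  apply (Rmult_le_compat_r (exp (al * t))) in HZt; [|left; apply exp_pos].
  rewrite Rmult_assoc, <- exp_plus in HZt. replace (- al * t + al * t) with 0 in HZt by ring.
  now rewrite exp_0, Rmult_1_r in HZt.
Qed.

Lemma continuous_sq_dist (N P : R -> R) x y t : continuous N t -> continuous P t ->
  continuous (fun t => (N t - x) ^ 2 + (P t - y) ^ 2) t.
Proof.
  intros HN HP.
  assert (Hsq : forall (f : R -> R) z, continuous f t -> continuous (fun t => (f t - z) ^ 2) t).
  { intros f z Hf. apply (continuous_comp f (fun v => (v - z) ^ 2)); [exact Hf|].
    apply (ex_derive_continuous (K := R_AbsRing) (V := R_NormedModule)). now auto_derive. }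
  apply (continuous_plus (fun t => (N t - x) ^ 2) (fun t => (P t - y) ^ 2)); now apply Hsq.
Qed.

Lemma Rabs_le_of_sum_sq u v c : 0 <= c -> u ^ 2 + v ^ 2 <= c ^ 2 -> Rabs u <= c /\ Rabs v <= c.
Proof.
  intros Hc H. pose proof (pow2_ge_0 u). pose proof (pow2_ge_0 v).
  split; apply Rabs_le_of_sq; lra.
Qed.

Lemma inbox_of_sq_dist_le x eps N P : 0 <= eps -> (N - x) ^ 2 + (P - 0) ^ 2 <= eps ^ 2 ->
  inbox (x - eps) (x + eps) (- eps) eps N P.
Proof.
  intros He H. destruct (Rabs_le_of_sum_sq _ _ eps He H) as [Bu Bv].
  apply Rabs_le_between in Bu, Bv. split; lra.
Qed.

Section Escape.

Variables (F G : R -> R -> R) (x eps al : R).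
Hypotheses (Heps : 0 < eps) (Hal : 0 < al).
Hypotheses (HF : lip_bounded_on (x - eps) (x + eps) (- eps) eps F)
           (HG : lip_bounded_on (x - eps) (x + eps) (- eps) eps G).
Hypothesis Hgrowth : forall N P, Rabs (N - x) <= eps -> Rabs P <= eps -> 0 <= P ->
  al * P <= G N P.

Lemma escape_not_stable : ~ lyapunov_stable F G x 0.
Proof.
  intros Hstab. destruct (Hstab eps Heps) as [d [Hd Hdd]].
  set (p := Rmin d eps / 2).
  assert (Hp : 0 < p /\ 2 * p <= d /\ 2 * p <= eps).
  { unfold p. pose proof (Rmin_l d eps). pose proof (Rmin_r d eps).
    repeat split; try lra. apply Rmin_case; lra. }
  set (T := 2 * eps / (p * al)).
  assert (HT : 0 < T) by (apply Rdiv_lt_0_compat; nra).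
  destruct (box_solution (x - eps) (x + eps) (- eps) eps F G T x p (p / 2))
    as (N & P & HN0 & HP0 & Hsol); try lra; try easy.
  apply Rabs_def2 in HN0, HP0.
  assert (H0 : (N 0 - x) ^ 2 + (P 0 - 0) ^ 2 < (2 * p) ^ 2) by nra.
  assert (Hdist0 : dist2 (N 0) (P 0) x 0 < d).
  { apply (Rlt_le_trans _ (2 * p)); [apply dist2_lt_iff; lra | lra]. }
  assert (Hin : forall t, 0 <= t <= T -> (N t - x) ^ 2 + (P t - 0) ^ 2 < eps ^ 2).
  { apply continuous_induction.
    - intros t Ht. destruct (Hsol t Ht) as (CN & CP & _). now apply continuous_sq_dist.
    - nra.
    - intros s Hs Hle. apply dist2_lt_iff; [lra|]. apply (Hdd s N P); [|exact Hdist0|lra].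
      intros u Hu. destruct (Hsol u ltac:(lra)) as (_ & _ & Hder).
      apply Hder, inbox_of_sq_dist_le, Hle; lra. }
  assert (Hgrow : P 0 * exp (al * T) <= P T).
  { apply (exp_growth_of_is_derive P (fun t => G (N t) (P t)) al T); [lra | | | lra].
    - intros t Ht. destruct (Hsol t Ht) as (_ & _ & Hder).
      apply Hder, inbox_of_sq_dist_le, Rlt_le, Hin; lra.
    - intros t Ht HPt.
      destruct (Rabs_le_of_sum_sq _ _ eps ltac:(lra) (Rlt_le _ _ (Hin t Ht))) as [Bu Bv].
      rewrite Rminus_0_r in Bv. now apply Hgrowth. }
  assert (HPT : Rabs (P T) < eps).
  { specialize (Hin T ltac:(lra)). pose proof (pow2_ge_0 (N T - x)).
    apply Rabs_lt_of_sq; [lra|]. rewrite Rminus_0_r in Hin. lra. }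
  apply Rabs_def2 in HPT.
  pose proof (exp_ineq1_le (al * T)).
  assert (al * T * p = 2 * eps) by (unfold T; field; lra).
  assert (p / 2 * (1 + al * T) <= P 0 * exp (al * T)).
  { apply Rmult_le_compat; nra. }
  nra.
Qed.

End Escape.

(** * The predator-prey system near E1 *)

Section Model.

Variables (r K h w a b c delta : R).
Hypotheses (Hr : 0 < r) (HK : 0 < K) (Hh : 0 < h) (Hw : 0 < w) (Ha : 0 < a) (Hb : 0 < b)
  (Hc : 0 < c) (Hd : 0 < delta) (HwK : w < K) (Hhw : h < w).

(* [N1] and [N2] are the roots of
   [N^2 - (K - w) N + K (h - w) = - K (w + N) (1 - N/K - h/(w + N))]. *)
Definition N2 : R := ((K - w) - sqrt ((K - w) ^ 2 - 4 * K * (h - w))) / 2.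

Definition prey_factor (N : R) : R := r * N * (N - N2) / (K * (w + N)).
Definition pred_response (N : R) : R := a * N / (b + N ^ 2).
Definition pred_growth (N : R) : R := c * N / (b + N ^ 2) - delta.

Lemma discriminant_pos : 0 < (K - w) ^ 2 - 4 * K * (h - w).
Proof. pose proof (pow2_ge_0 (K - w)). nra. Qed.

Lemma N1_sub_N2 : N1 K h w - N2 = sqrt ((K - w) ^ 2 - 4 * K * (h - w)).
Proof. unfold N1, N2. field. Qed.

Lemma N1_pos : 0 < N1 K h w.
Proof.
  unfold N1. pose proof (sqrt_lt_R0 _ discriminant_pos). lra.
Qed.

Lemma N1_N2_roots N : (N - N1 K h w) * (N - N2) = N ^ 2 - (K - w) * N + K * (h - w).
Proof.
  unfold N1, N2. pose proof (sqrt_sqrt _ (Rlt_le _ _ discriminant_pos)). nra.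
Qed.

Lemma b_add_sq_pos N : 0 < b + N ^ 2.
Proof. pose proof (pow2_ge_0 N). lra. Qed.

Lemma fN_factor N P : 0 <= N ->
  fN r K h w a b N P = - (N - N1 K h w) * prey_factor N - pred_response N * P.
Proof.
  intros HN. pose proof (b_add_sq_pos N).
  assert (E : r * N * (1 - N / K - h / (w + N)) =
              - (r * N * ((N - N1 K h w) * (N - N2))) / (K * (w + N))).
  { rewrite N1_N2_roots. field. lra. }
  unfold fN, prey_factor, pred_response. rewrite E. field. lra.
Qed.

Lemma fP_factor N P : fP b c delta N P = P * pred_growth N.
Proof. unfold fP, pred_growth. pose proof (b_add_sq_pos N). field. lra. Qed.

Lemma prey_factor_N1_pos : 0 < prey_factor (N1 K h w).
Proof.
  unfold prey_factor. rewrite N1_sub_N2. pose proof N1_pos.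
  pose proof (sqrt_lt_R0 _ discriminant_pos).
  apply Rdiv_lt_0_compat; apply Rmult_lt_0_compat; nra.
Qed.

Lemma pred_growth_N1 :
  pred_growth (N1 K h w) =
  N1 K h w / (b + N1 K h w ^ 2) * (c - delta * (b + N1 K h w ^ 2) / N1 K h w).
Proof.
  unfold pred_growth. pose proof N1_pos. pose proof (b_add_sq_pos (N1 K h w)). field. lra.
Qed.

Lemma pred_growth_N1_neg : c < delta * (b + N1 K h w ^ 2) / N1 K h w -> pred_growth (N1 K h w) < 0.
Proof.
  intros Hcs. rewrite pred_growth_N1. pose proof N1_pos. pose proof (b_add_sq_pos (N1 K h w)).
  apply Rmult_pos_neg; [apply Rdiv_lt_0_compat|]; lra.
Qed.

Lemma pred_growth_N1_pos : c > delta * (b + N1 K h w ^ 2) / N1 K h w -> 0 < pred_growth (N1 K h w).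
Proof.
  intros Hcs. rewrite pred_growth_N1. pose proof N1_pos. pose proof (b_add_sq_pos (N1 K h w)).
  apply Rmult_lt_0_compat; [apply Rdiv_lt_0_compat|]; lra.
Qed.

Lemma continuous_prey_factor N : 0 <= N -> continuous prey_factor N.
Proof.
  intros HN. apply (ex_derive_continuous (K := R_AbsRing) (V := R_NormedModule)).
  unfold prey_factor. auto_derive. nra.
Qed.

Lemma continuous_pred_response N : continuous pred_response N.
Proof.
  apply (ex_derive_continuous (K := R_AbsRing) (V := R_NormedModule)).
  unfold pred_response. auto_derive. pose proof (b_add_sq_pos N). simpl in *. lra.
Qed.

Lemma continuous_pred_growth N : continuous pred_growth N.
Proof.
  apply (ex_derive_continuous (K := R_AbsRing) (V := R_NormedModule)).
  unfold pred_growth. auto_derive. pose proof (b_add_sq_pos N). simpl in *. lra.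
Qed.

Lemma model_lyap_decay : pred_growth (N1 K h w) < 0 ->
  exists rho g k, 0 < rho /\ 0 < g /\ 1 <= k /\
  forall N P, Rabs (N - N1 K h w) <= rho ->
    lyap_orbital (fN r K h w a b) (fP b c delta) k (N1 K h w) 0 N P
    <= - g * lyap k (N1 K h w) 0 N P.
Proof.
  intros Hq. set (x := N1 K h w) in *. pose proof N1_pos as Hx. fold x in Hx.
  pose proof prey_factor_N1_pos as Hph. fold x in Hph.
  set (al := - pred_growth x / 2). set (be := prey_factor x / 2).
  set (M := Rabs (pred_response x) + 1).
  assert (Hnear : locally x (fun N =>
    Rabs (N - x) < x /\ Rabs (prey_factor N - prey_factor x) < be /\
    Rabs (pred_growth N - pred_growth x) < al /\ Rabs (pred_response N - pred_response x) < 1)).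
  { repeat apply filter_and.
    - now exists (mkposreal x Hx).
    - apply continuous_locally_Rabs; [apply continuous_prey_factor | unfold be]; lra.
    - apply continuous_locally_Rabs; [apply continuous_pred_growth | unfold al; lra].
    - apply continuous_locally_Rabs; [apply continuous_pred_response | lra]. }
  destruct (locally_closed_ball x _ Hnear) as [rho [Hrho Hball]].
  exists rho, (Rmin al be), (1 + M ^ 2 / (al * be)).
  assert (Hab : 0 < al /\ 0 < be) by (unfold al, be; lra).
  split; [exact Hrho | split; [apply Rmin_case; lra | split]].
  { enough (0 <= M ^ 2 / (al * be)) by lra. apply Rdiv_le_0_compat; [apply pow2_ge_0 | nra]. }
  intros N P HN. destruct (Hball N HN) as (HNx & Hph' & Hq' & Hm').
  apply Rabs_def2 in HNx, Hph', Hq'.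
  unfold lyap_orbital, lyap. rewrite fN_factor, fP_factor by lra. fold x.
  replace (P - 0) with P by ring.
  apply (triangular_lyap_bound _ _ _ _ _ al be M); try easy; unfold al, be, M in *; try lra.
  - pose proof (Rabs_pos (pred_response x)). lra.
  - pose proof (Rabs_triang_inv (pred_response N) (pred_response x)). lra.
Qed.

Lemma model_stable : c < delta * (b + N1 K h w ^ 2) / N1 K h w ->
  locally_asymptotically_stable (fN r K h w a b) (fP b c delta) (N1 K h w) 0.
Proof.
  intros Hcs.
  destruct (model_lyap_decay (pred_growth_N1_neg Hcs)) as (rho & g & k & Hrho & Hg & Hk & Hdecay).
  exact (lyap_locally_asymptotically_stable _ _ _ _ rho g k Hrho Hg Hk Hdecay).
Qed.

Lemma jac11_fN : jac11 (fN r K h w a b) (N1 K h w) 0 = - prey_factor (N1 K h w).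
Proof.
  unfold jac11. apply is_derive_unique. pose proof N1_pos as Hx. set (x := N1 K h w) in *.
  apply (is_derive_ext_loc (fun N => - (N - x) * prey_factor N)).
  - exists (mkposreal x Hx). intros N HN. change (Rabs (N - x) < x) in HN.
    apply Rabs_def2 in HN. rewrite fN_factor by lra. now rewrite Rmult_0_r, Rminus_0_r.
  - assert (Hp : ex_derive prey_factor x) by (unfold prey_factor; auto_derive; nra).
    destruct Hp as [dp Hp].
    replace (- prey_factor x) with (-1 * prey_factor x + - (x - x) * dp) by ring.
    apply (is_derive_mult (fun N => - (N - x)) prey_factor); [|exact Hp|intros; apply Rmult_comm].
    auto_derive; [easy | ring].
Qed.

Lemma jac12_fN : jac12 (fN r K h w a b) (N1 K h w) 0 = - pred_response (N1 K h w).
Proof.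
  unfold jac12, fN, pred_response. apply is_derive_unique.
  pose proof (b_add_sq_pos (N1 K h w)). auto_derive; [simpl in *; lra | field; lra].
Qed.

Lemma jac11_fP : jac11 (fP b c delta) (N1 K h w) 0 = 0.
Proof.
  unfold jac11. rewrite (Derive_ext _ (fun _ => 0)); [apply Derive_const|].
  intros N. unfold fP, Rdiv. ring.
Qed.

Lemma jac12_fP : jac12 (fP b c delta) (N1 K h w) 0 = pred_growth (N1 K h w).
Proof.
  unfold jac12. rewrite (Derive_ext _ (fun P => P * pred_growth (N1 K h w))); [|apply fP_factor].
  apply is_derive_unique. auto_derive; [easy | ring].
Qed.

Lemma model_saddle : c > delta * (b + N1 K h w ^ 2) / N1 K h w ->
  saddle (fN r K h w a b) (fP b c delta) (N1 K h w) 0.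
Proof.
  intros Hcs. pose proof (pred_growth_N1_pos Hcs) as Hq.
  pose proof prey_factor_N1_pos as Hph.
  exists (- prey_factor (N1 K h w)), (pred_growth (N1 K h w)).
  split; [lra|split].
  - exists 1, 0. split; [left; lra|].
    rewrite jac11_fN, jac12_fN, jac11_fP, jac12_fP. split; ring.
  - exists (- pred_response (N1 K h w) / (pred_growth (N1 K h w) + prey_factor (N1 K h w))), 1.
    split; [right; lra|].
    rewrite jac11_fN, jac12_fN, jac11_fP, jac12_fP. split; [field; lra | ring].
Qed.

Lemma lip_bounded_fN l1 u1 l2 u2 : 0 <= l1 -> lip_bounded_on l1 u1 l2 u2 (fN r K h w a b).
Proof.
  intros Hl1. unfold fN. apply lip_bounded_minus.
  - apply lip_bounded_mult; [apply lip_bounded_mult; [apply lip_bounded_const | apply lip_bounded_fst]|].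
    apply lip_bounded_minus; [apply lip_bounded_minus; [apply lip_bounded_const|] |].
    + apply (lip_bounded_div _ _ _ _ _ _ K); [lra | apply lip_bounded_fst | apply lip_bounded_const | ].
      intros; lra.
    + apply (lip_bounded_div _ _ _ _ _ _ w); [lra | apply lip_bounded_const | |].
      * apply lip_bounded_plus; [apply lip_bounded_const | apply lip_bounded_fst].
      * intros N P [HN _]. lra.
  - apply (lip_bounded_div _ _ _ _ _ _ b); [lra | | |].
    + apply lip_bounded_mult; [apply lip_bounded_mult; [apply lip_bounded_const | apply lip_bounded_fst]|].
      apply lip_bounded_snd.
    + apply lip_bounded_plus; [apply lip_bounded_const | apply lip_bounded_fst_sq].
    + intros N P _. pose proof (pow2_ge_0 N). lra.
Qed.

Lemma lip_bounded_fP l1 u1 l2 u2 : lip_bounded_on l1 u1 l2 u2 (fP b c delta).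
Proof.
  unfold fP. apply lip_bounded_minus.
  - apply (lip_bounded_div _ _ _ _ _ _ b); [lra | | |].
    + apply lip_bounded_mult; [apply lip_bounded_mult; [apply lip_bounded_const | apply lip_bounded_fst]|].
      apply lip_bounded_snd.
    + apply lip_bounded_plus; [apply lip_bounded_const | apply lip_bounded_fst_sq].
    + intros N P _. pose proof (pow2_ge_0 N). lra.
  - apply lip_bounded_mult; [apply lip_bounded_const | apply lip_bounded_snd].
Qed.

Lemma model_unstable : c > delta * (b + N1 K h w ^ 2) / N1 K h w ->
  unstable (fN r K h w a b) (fP b c delta) (N1 K h w) 0.
Proof.
  intros Hcs. pose proof (pred_growth_N1_pos Hcs) as Hq. pose proof N1_pos as Hx.
  set (x := N1 K h w) in *. set (al := pred_growth x / 2).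
  destruct (locally_closed_ball x _ (continuous_locally_Rabs _ x al (continuous_pred_growth x)
    ltac:(unfold al; lra))) as [rho [Hrho Hball]].
  set (eps := Rmin rho x).
  assert (Heps : 0 < eps /\ eps <= rho /\ eps <= x).
  { unfold eps. pose proof (Rmin_l rho x). pose proof (Rmin_r rho x).
    repeat split; try lra. apply Rmin_case; lra. }
  apply (escape_not_stable _ _ x eps al); [lra | unfold al; lra | apply lip_bounded_fN; lra
    | apply lip_bounded_fP |].
  intros N P HN _ HP. rewrite fP_factor.
  specialize (Hball N ltac:(lra)). apply Rabs_def2 in Hball. unfold al in *. nra.
Qed.

End Model.

Theorem theorem5 (r K h w a b c delta : R) :
  0 < r -> 0 < K -> 0 < h -> 0 < w -> 0 < a -> 0 < b -> 0 < c -> 0 < delta ->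
  w < K -> h < w ->
  (c < delta * (b + (N1 K h w) ^ 2) / N1 K h w ->
     locally_asymptotically_stable (fN r K h w a b) (fP b c delta) (N1 K h w) 0)
  /\
  (c > delta * (b + (N1 K h w) ^ 2) / N1 K h w ->
     unstable (fN r K h w a b) (fP b c delta) (N1 K h w) 0 /\
     saddle (fN r K h w a b) (fP b c delta) (N1 K h w) 0).
Proof.
  intros Hr HK Hh Hw Ha Hb Hc Hd HwK Hhw. split.
  - now apply model_stable.
  - intros Hcs. split; [now apply model_unstable | now apply model_saddle].
Qed.
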